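(* Let $G$ be a finite group, let $n\ge1$, and let $\phi,\theta\in S_n$ be such that $\theta$ is obtained from $\phi$ by an $x$--$y$ cyclic operation for some $x,y\in\{0,1,\dots,n\}$. Then \[ Pr(a_1a_2\cdots a_n=a_{\phi_1}a_{\phi_2}\cdots a_{\phi_n})=Pr(a_1a_2\cdots a_n=a_{\theta_1}a_{\theta_2}\cdots a_{\theta_n}), \] where in both cases $a_1,\dots,a_n$ are independent and uniformly random elements of $G$.
   Context: Permutations are written in one-line notation $\phi=\langle\phi_1\dots\phi_n\rangle$, with $\phi_i=\phi(i)$; set $\phi_0=0$. The big black cycle of $\phi$ is the $(n+1)$-cycle $\phi^{\cdot}$ on $\{0,1,\dots,n\}$ defined by $\phi^{\cdot}(\phi_i)=\phi_{i-1}$ for $1\le i\le n$ and $\phi^{\cdot}(0)=\phi_n$. In cycle notation, $\phi^{\cdot}=(0,\phi_n,\phi_{n-1},\dots,\phi_1)$. We write $a\to b$ when $\phi^{\cdot}(a)=b$. Every $(n+1)$-cycle $(0,c_n,\dots,c_1)$ on $\{0,\dots,n\}$ is the big black cycle of exactly one permutation, namely $\langle c_1\dots c_n\rangle$. $x$--$y$ cyclic operation: suppose $\phi^{\cdot}$ contains $x+1\to y\to x$; when $x=n$ this condition reads $0\to y\to n$. Then $\theta$ is the permutation whose big black cycle $\theta^{\cdot}$ is obtained from $\phi^{\cdot}$ by relabeling its entries as follows. (i) If $x<n$ and $y>x+1$: the entry $x+1$ is replaced by $y-1$, each entry $t$ with $x+2\le t\le y-1$ is replaced by $t-1$, and all other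 entries are unchanged. (ii) If $y<x$: the entry $x$ is replaced by $y+1$, each entry $t$ with $y+1\le t\le x-1$ is replaced by $t+1$, and all other entries are unchanged. *)

From mathcomp Require Import all_boot all_order all_algebra all_fingroup.
Set Implicit Arguments. Unset Strict Implicit. Unset Printing Implicit Defensive.

Local Open Scope nat_scope.

(* A permutation phi of {1..n} is encoded as phi : 'S_n on {0..n-1}:
   the paper's phi_i (1 <= i <= n) is (phi (i-1)).+1.
   [oneline0 phi] is the list [:: phi_0; phi_1; ...; phi_n] with phi_0 = 0. *)
Definition oneline0 (n : nat) (phi : 'S_n) : seq nat :=
  0 :: [seq (phi i).+1 | i <- enum 'I_n].

Definition phiv (n : nat) (phi : 'S_n) (i : nat) : nat := nth 0 (oneline0 phi) i.

(* The big black cycle phi^. on {0,...,n}: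
   phi^.(phi_i) = phi_(i-1) for 1 <= i <= n, and phi^.(0) = phi_n. *)
Definition bbc (n : nat) (phi : 'S_n) (a : nat) : nat :=
  match index a (oneline0 phi) with
  | j.+1 => phiv phi j
  | 0 => phiv phi n
  end.

Definition relab_i (x y t : nat) : nat :=
  if t == x.+1 then y.-1
  else if (x.+2 <= t) && (t <= y.-1) then t.-1 else t.

Definition relab_ii (x y t : nat) : nat :=
  if t == x then y.+1
  else if (y.+1 <= t) && (t <= x.-1) then t.+1 else t.

(* "x+1" in the condition x+1 -> y -> x, read as 0 when x = n. *)
Definition succ_cyc (n x : nat) : nat := if x == n then 0 else x.+1.

(* theta is obtained from phi by the x--y cyclic operation: phi^. contains
   x+1 -> y -> x (0 -> y -> n when x = n), we are in case (i) or (ii), and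
   theta^. is phi^. with every entry t relabeled to r t, i.e.
   theta^.(r k) = r (phi^.(k)) for all k in {0..n}. *)
Definition cyclic_op (n : nat) (phi theta : 'S_n) (x y : nat) : Prop :=
  [/\ x <= n, y <= n,
      bbc phi (succ_cyc n x) = y, bbc phi y = x &
      ((x < n /\ x.+1 < y /\
        forall k, k <= n -> bbc theta (relab_i x y k) = relab_i x y (bbc phi k))
       \/
       (y < x /\
        forall k, k <= n -> bbc theta (relab_ii x y k) = relab_ii x y (bbc phi k)))].

Definition word_prob (gT : finGroupType) (n : nat) (phi : 'S_n) : rat :=
  ((#|[set a : {ffun 'I_n -> gT} |
        (\prod_(i < n) a i)%g == (\prod_(i < n) a (phi i))%g]|)%:R
   / (#|{ffun 'I_n -> gT}|)%:R)%R.

From mathcomp Require Import all_boot all_order all_algebra all_fingroup.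
From mathcomp Require Import zify.
Import GRing.Theory Num.Theory.
Set Implicit Arguments. Unset Strict Implicit. Unset Printing Implicit Defensive.

(* Count the valuations c of the letters 0..n in G solving u = w, with letter 0 a free
   variable: it comes first in both words, so it only contributes a factor |G|. Renaming the
   letters by the relabelling r of the cyclic operation turns the equation of phi into
   r(id) = (word of theta). Compared with id, the word r(id) has a single letter z (y - 1 in
   case (i), y + 1 in case (ii)) moved across a block, while the word of theta contains the
   adjacent pair x y (resp. y, x + 1). The change of variables c x := c x * c z,
   c y := (c z)^-1 * c y is a bijection of valuations which fixes the value of the word of
   theta and transforms the value of id into that of r(id); case (ii) is its mirror image.
   In the wrap-around case x = n the adjacency passes through letter 0 at the ends of the
   word, and moving 0 from the front to the back of both words reduces it to case (ii). *)

Section WordEquations.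
Variables (gT : finGroupType) (I : finType).
Local Open Scope group_scope.
Implicit Types (c : {ffun I -> gT}) (u w : seq I).

Definition weval c u : gT := \prod_(i <- u) c i.

Definition nsol u w : nat := #|[set c : {ffun I -> gT} | weval c u == weval c w]|.

Lemma nsol_subst (S : {ffun I -> gT} -> {ffun I -> gT}) u w u' w' :
  injective S -> (forall c, (weval (S c) u == weval (S c) w) = (weval c u' == weval c w')) ->
  nsol u w = nsol u' w'.
Proof.
move=> injS eqS; rewrite /nsol -(card_preimset _ injS).
by apply: eq_card => c; rewrite !inE eqS.
Qed.

Lemma nsol_perm (s : {perm I}) u w : nsol (map s u) (map s w) = nsol u w.
Proof.
symmetry; apply: (@nsol_subst (fun c => [ffun i => c (s i)])) => [c1 c2 E|c].
  by apply/ffunP => i; have := congr1 (fun c => c (s^-1 i)) E; rewrite !ffunE permKV.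
have E v : weval [ffun i => c (s i)] v = weval c (map s v).
  by rewrite /weval big_map; apply: eq_bigr => i _; rewrite ffunE.
by rewrite !E.
Qed.

Lemma nsol_rev u w : nsol (rev u) (rev w) = nsol u w.
Proof.
symmetry; apply: (@nsol_subst (fun c => [ffun i => (c i)^-1])) => [c1 c2 E|c].
  by apply/ffunP => i; have := congr1 (fun c => c i) E; rewrite !ffunE => /invg_inj.
have E v : weval [ffun i => (c i)^-1] v = (weval c (rev v))^-1.
  by rewrite /weval -prodgV; apply: eq_bigr => i _; rewrite ffunE.
by rewrite !E eqg_inv.
Qed.

Lemma nsol_cons2 a u w : nsol (a :: u) (a :: w) = nsol u w.
Proof. by apply: eq_card => c; rewrite !inE /weval !big_cons (inj_eq (mulgI _)). Qed.

Lemma nsol_rcons2 a u w : nsol (rcons u a) (rcons w a) = nsol u w.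
Proof.
by apply: eq_card => c; rewrite !inE /weval -!cats1 !big_cat !big_seq1 (inj_eq (mulIg _)).
Qed.

Lemma weval_cat c u w : weval c (u ++ w) = weval c u * weval c w.
Proof. exact: big_cat. Qed.

Lemma weval_cons c a u : weval c (a :: u) = c a * weval c u.
Proof. exact: big_cons. Qed.

Lemma uniq_mid_notin (a : I) u w : uniq (u ++ a :: w) -> a \notin u ++ w.
Proof. by rewrite (uniq_catCA u [:: a] w) => /andP[]. Qed.

Lemma nsol_move x z y A B C D E :
  uniq (A ++ x :: B ++ z :: y :: C) -> uniq (D ++ x :: y :: E) ->
  nsol (A ++ x :: B ++ z :: y :: C) (D ++ x :: y :: E) =
  nsol (A ++ x :: z :: B ++ y :: C) (D ++ x :: y :: E).
Proof.
move=> uu uw.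
have := uniq_mid_notin uu; rewrite !(mem_cat, inE) !negb_or => /and5P[xA xB xz xy xC].
have := @uniq_mid_notin y (A ++ x :: B ++ [:: z]) C; rewrite -catA /= -catA /= => /(_ uu).
rewrite !(mem_cat, inE) !negb_or => /andP[/and4P[yA _ yB yz] yC].
have := uniq_mid_notin uw; rewrite !(mem_cat, inE) !negb_or => /and3P[xD _ xE].
have := @uniq_mid_notin y (rcons D x) E; rewrite cat_rcons => /(_ uw).
rewrite mem_cat mem_rcons !inE !negb_or => /andP[/andP[_ yD] yE].
pose S c := [ffun i => if i == x then c x * c z
                       else if i == y then (c z)^-1 * c y else c i].
have Sfix c s : x \notin s -> y \notin s -> weval (S c) s = weval c s.
  move=> xs ys; apply: eq_big_seq => i si; rewrite ffunE.
  by case: eqP => [ix|_]; [rewrite -ix si in xs | case: eqP => [iy|//]; rewrite -iy si in ys].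
have Sx c : S c x = c x * c z by rewrite ffunE eqxx.
have Sy c : S c y = (c z)^-1 * c y by rewrite ffunE eq_sym (negbTE xy) eqxx.
have Sz c : S c z = c z by rewrite ffunE eq_sym (negbTE xz) eq_sym (negbTE yz).
apply: (nsol_subst (S := S)) => [c1 c2 E12|c].
  have ez : c1 z = c2 z by rewrite -Sz E12 Sz.
  apply/ffunP => i; have := congr1 (fun c => c i) E12; rewrite !ffunE.
  case: eqP => [->|_]; first by rewrite ez => /mulIg.
  by case: eqP => [->|//]; rewrite ez => /mulgI.
by rewrite !(weval_cat, weval_cons) !Sfix // Sx Sy Sz !mulgA !mulgK.
Qed.

Lemma nsol_move_rev y z t A B C D E :
  uniq (A ++ y :: z :: B ++ t :: C) -> uniq (D ++ y :: t :: E) ->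
  nsol (A ++ y :: z :: B ++ t :: C) (D ++ y :: t :: E) =
  nsol (A ++ y :: B ++ z :: t :: C) (D ++ y :: t :: E).
Proof.
rewrite -(nsol_rev (A ++ _)) -(nsol_rev (A ++ y :: B ++ _)) -!(rev_uniq (_ ++ _)).
rewrite !(rev_cat, rev_cons) -!cats1 -!catA /=.
exact: nsol_move.
Qed.

End WordEquations.

Section OneLine.
Variable n : nat.
Implicit Types (psi : 'S_n).

Lemma size_oneline0 psi : size (oneline0 psi) = n.+1.
Proof. by rewrite /= size_map size_enum_ord. Qed.

Lemma nth_oneline0S psi (i : 'I_n) : nth 0 (oneline0 psi) i.+1 = (psi i).+1.
Proof. by rewrite /= (nth_map i) ?size_enum_ord // nth_ord_enum. Qed.

Lemma uniq_oneline0 psi : uniq (oneline0 psi).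
Proof.
rewrite /= map_inj_uniq ?enum_uniq; last by move=> i j /succn_inj /val_inj /perm_inj.
by rewrite andbT; apply/mapP => -[].
Qed.

Lemma mem_oneline0 psi v : (v \in oneline0 psi) = (v <= n).
Proof.
case: v => [|v]; first by rewrite mem_head.
rewrite inE /=; apply/mapP/idP => [[i _ [->]] // | lt_v].
by exists (psi^-1 (Ordinal lt_v))%g; rewrite ?mem_enum ?permKV.
Qed.

Lemma nth_oneline0_le psi j : nth 0 (oneline0 psi) j <= n.
Proof.
have [lt_j|le_j] := ltnP j n.+1; last by rewrite nth_default ?size_oneline0.
by rewrite -(mem_oneline0 psi) mem_nth ?size_oneline0.
Qed.

Lemma oneline0_perm1 : oneline0 (1 : 'S_n) = iota 0 n.+1.
Proof.
rewrite /oneline0 /= -[1]/(1 + 0) iotaDl -val_enum_ord -map_comp.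
by congr (_ :: _); apply: eq_map => i; rewrite /= perm1.
Qed.

Lemma bbc0 psi : bbc psi 0 = nth 0 (oneline0 psi) n.
Proof. by []. Qed.

Lemma bbc_nth psi j : j < n -> bbc psi (nth 0 (oneline0 psi) j.+1) = nth 0 (oneline0 psi) j.
Proof. by move=> lt_jn; rewrite /bbc index_uniq ?uniq_oneline0 ?size_oneline0. Qed.

Lemma bbc_le psi a : bbc psi a <= n.
Proof. by rewrite /bbc /phiv; case: index => [|j]; apply: nth_oneline0_le. Qed.

Lemma iter_bbc psi m : m < n.+1 -> iter m.+1 (bbc psi) 0 = nth 0 (oneline0 psi) (n - m).
Proof.
elim: m => [|m IHm] lt_m; first by rewrite subn0.
by rewrite iterS IHm 1?ltnW // -(bbc_nth psi (_ : n - m.+1 < n)) ?subnSK //; lia.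
Qed.

(* phi_(n - m) is the (m + 1)-th iterate of phi^. at 0 (iter_bbc), and r intertwines the
   iterates of phi^. and theta^.. *)
Lemma relabel_oneline0 (phi theta : 'S_n) (r : nat -> nat) : r 0 = 0 ->
    (forall k, k <= n -> bbc theta (r k) = r (bbc phi k)) ->
  forall i, (theta i).+1 = r (phi i).+1.
Proof.
move=> r0 r_bbc.
have iterE k : iter k (bbc theta) 0 = r (iter k (bbc phi) 0).
  elim: k => [|k IHk] //=; rewrite IHk r_bbc //.
  by case: k {IHk} => [|k]; [exact: leq0n | exact: bbc_le].
move=> i; have lt_m : n - i.+1 < n.+1 by lia.
by have := iterE (n - i.+1).+1; rewrite !iter_bbc // subKn // !nth_oneline0S.
Qed.

Lemma bbc_adjacent psi a :
  0 < a <= n -> exists D E, oneline0 psi = D ++ bbc psi a :: a :: E.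
Proof.
move=> /andP[a_gt0]; rewrite -(mem_oneline0 psi) /bbc /phiv; set o := oneline0 psi => a_o.
case Ea: (index a o) => [|j]; first by move: (nth_index 0 a_o) a_gt0; rewrite Ea => <-.
have lt_j : j.+1 < size o by rewrite -Ea index_mem.
have nth_a : nth 0 o j.+1 = a by rewrite -Ea nth_index.
exists (take j o), (drop j.+2 o).
by rewrite -{1}(cat_take_drop j o) (drop_nth 0 (ltnW lt_j)) (drop_nth 0 lt_j) nth_a.
Qed.

Lemma bbc0_last psi : 0 < n -> exists D, oneline0 psi = 0 :: rcons D (bbc psi 0).
Proof.
move=> n_gt0; rewrite bbc0 /oneline0.
have : size [seq (psi i).+1 | i <- enum 'I_n] = n by rewrite size_map size_enum_ord.
case/lastP: (map _ _) => [|D l] size_Dl; first by rewrite -size_Dl in n_gt0.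
by exists D; rewrite -(prednK n_gt0) /= nth_rcons -size_Dl size_rcons ltnn eqxx.
Qed.

End OneLine.

Lemma card_ffun_tail (T : finType) n (p : pred {ffun 'I_n -> T}) :
  #|[set c : {ffun 'I_n.+1 -> T} | p [ffun i => c (lift ord0 i)]]| = #|T| * #|[set a | p a]|.
Proof.
pose ext (ga : T * {ffun 'I_n -> T}) : {ffun 'I_n.+1 -> T} :=
  [ffun j => if unlift ord0 j is Some i then ga.2 i else ga.1].
have ext0 ga : ext ga ord0 = ga.1 by rewrite ffunE unlift_none.
have extS ga i : ext ga (lift ord0 i) = ga.2 i by rewrite ffunE liftK.
have ext_inj : injective ext.
  move=> [g a] [g' a'] E; have := ext0 (g, a); rewrite E ext0 /= => ->.
  by congr (_, _); apply/ffunP => i; rewrite -(extS (g, a)) E extS.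
rewrite -cardsT -cardsX -(card_imset _ ext_inj); congr #|pred_of_set _|.
apply/setP => c; rewrite !inE; apply/idP/imsetP => [pc | [[g a]]].
  exists (c ord0, [ffun i => c (lift ord0 i)]); rewrite ?inE //.
  by apply/ffunP => j; rewrite ffunE; case: unliftP => [i ->|->]; rewrite ?ffunE.
rewrite !inE => pa ->; suff -> : [ffun i => ext (g, a) (lift ord0 i)] = a by [].
by apply/ffunP => i; rewrite ffunE extS.
Qed.

Section LiftedWords.
Variables (gT : finGroupType) (n : nat).
Local Open Scope group_scope.

Definition oword (psi : 'S_n) : seq 'I_n.+1 := map inord (oneline0 psi).

Lemma uniq_oword psi : uniq (oword psi).
Proof.
rewrite map_inj_in_uniq ?uniq_oneline0 // => u v.
by rewrite !mem_oneline0 => u_le v_le /(congr1 (@nat_of_ord n.+1)); rewrite !inordK.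
Qed.

Lemma weval_oword (c : {ffun 'I_n.+1 -> gT}) psi :
  weval c (oword psi) = c ord0 * \prod_(i < n) c (lift ord0 (psi i)).
Proof.
rewrite /oword /= weval_cons (_ : inord 0 = ord0); last exact/ord_inj/inordK.
congr (_ * _); rewrite /weval -map_comp big_map [index_enum _]unlock -enumT.
by apply: eq_bigr => i _; congr (c _); apply/ord_inj => /=; rewrite inordK ?ltnS ?ltn_ord.
Qed.

Lemma word_prob_nsol psi :
  word_prob gT psi = ((nsol gT (oword 1) (oword psi))%:R / (#|gT| ^ n.+1)%:R)%R.
Proof.
have -> : nsol gT (oword 1) (oword psi) =
    (#|gT| * #|[set a : {ffun 'I_n -> gT} |
                (\prod_(i < n) a i == \prod_(i < n) a (psi i))%g]|)%N.
  rewrite -card_ffun_tail; apply: eq_card => c.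
  rewrite !inE !weval_oword (inj_eq (mulgI _)).
  by congr (_ == _); apply: eq_bigr => i _; rewrite ffunE ?perm1.
rewrite /word_prob card_ffun card_ord expnS !natrM -mulf_div divff ?mul1r //.
by rewrite pnatr_eq0 -lt0n; apply/card_gt0P; exists 1%g.
Qed.

Lemma nsol_relabel (phi theta : 'S_n) (r : nat -> nat) : r 0 = 0 ->
    (forall k, k <= n -> bbc theta (r k) = r (bbc phi k)) ->
  nsol gT (oword 1) (oword phi) = nsol gT (map inord (map r (iota 0 n.+1))) (oword theta).
Proof.
move=> r0 r_bbc; have rel := relabel_oneline0 r0 r_bbc.
pose R := lift_perm ord0 ord0 (phi^-1 * theta).
have R_inord v : v <= n -> R (inord v) = inord (r v).
  case: v => [_|v lt_v].
    by rewrite r0 (_ : inord 0 = ord0) ?lift_perm_id //; apply/ord_inj/inordK.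
  have -> : inord v.+1 = lift ord0 (Ordinal lt_v) by apply/ord_inj; rewrite /= inordK.
  have := rel (phi^-1 (Ordinal lt_v)); rewrite permKV /= => <-.
  by rewrite lift_perm_lift permM; apply/ord_inj; rewrite lift0 inordK ?ltnS ?ltn_ord.
have map_R psi : map R (oword psi) = map inord (map r (oneline0 psi)).
  by rewrite /oword -!map_comp; apply/eq_in_map => v; rewrite mem_oneline0 => /R_inord.
rewrite -(nsol_perm gT R) !map_R oneline0_perm1; congr (nsol _ _ (map inord _)).
by rewrite /= r0 -map_comp; congr (_ :: _); apply: eq_map => i; rewrite /= rel.
Qed.

End LiftedWords.

Lemma iota_cut a b c : a <= b <= c -> iota a (c - a) = iota a (b - a) ++ iota b (c - b).
Proof.
move=> /andP[ab bc]; have -> : c - a = (b - a) + (c - b) by lia.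
by rewrite iotaD subnKC.
Qed.

Lemma relab_i_id x y t : x.+1 < y -> (t <= x) || (y <= t) -> relab_i x y t = t.
Proof. by rewrite /relab_i => ? ?; case: eqP => ?; [lia | case: andP => //; lia]. Qed.

Lemma relab_ii_id x y t : y < x -> (t <= y) || (x < t) -> relab_ii x y t = t.
Proof. by rewrite /relab_ii => ? ?; case: eqP => ?; [lia | case: andP => //; lia]. Qed.

Lemma relab_i_iota x y n : x.+1 < y <= n ->
  iota 0 n.+1 = iota 0 x ++ x :: iota x.+1 (y - x.+2) ++ y.-1 :: y :: iota y.+1 (n - y) /\
  map (relab_i x y) (iota 0 n.+1) =
    iota 0 x ++ x :: y.-1 :: iota x.+1 (y - x.+2) ++ y :: iota y.+1 (n - y).
Proof.
move=> /andP[xy yn].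
have ids : iota 0 n.+1 = iota 0 x ++ x :: iota x.+1 (y - x.+1) ++ y :: iota y.+1 (n - y).
  rewrite -[n.+1]subn0 (@iota_cut 0 x n.+1); last lia.
  rewrite (@iota_cut x y n.+1); last lia.
  rewrite (@iota_cut y y.+1 n.+1); last lia.
  by rewrite subn0 subSnn (_ : y - x = (y - x.+1).+1) //; lia.
have B_shift : map (relab_i x y) (iota x.+2 (y - x.+2)) = iota x.+1 (y - x.+2).
  rewrite -[x.+2]add1n iotaDl -map_comp -[RHS]map_id; apply/eq_in_map => t.
  rewrite mem_iota /relab_i /= => t_in; case: eqP => [|_]; first lia.
  by case: andP => [//|]; lia.
have r_fix t : (t <= x) || (y <= t) -> relab_i x y t = t by exact: relab_i_id.
have r_fixs m l : (m + l <= x.+1) || (y <= m) -> map (relab_i x y) (iota m l) = iota m l.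
  move=> ?; rewrite -[RHS]map_id; apply/eq_in_map => t.
  by rewrite mem_iota => ?; apply: r_fix; lia.
split.
  rewrite ids (_ : y - x.+1 = y - x.+2 + 1); last lia.
  by rewrite iotaD -catA (_ : x.+1 + (y - x.+2) = y.-1); last lia.
rewrite ids (_ : y - x.+1 = (y - x.+2).+1) /=; last lia.
rewrite !map_cat /= map_cat /= B_shift [relab_i x y x.+1]/relab_i eqxx.
by rewrite !r_fixs ?r_fix //; lia.
Qed.

Lemma relab_ii_iota x y n : y < x <= n ->
  iota 0 n.+1 = iota 0 y ++ y :: y.+1 :: iota y.+2 (x - y.+1) ++ iota x.+1 (n - x) /\
  map (relab_ii x y) (iota 0 n.+1) =
    iota 0 y ++ y :: iota y.+2 (x - y.+1) ++ y.+1 :: iota x.+1 (n - x).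
Proof.
move=> /andP[yx xn].
have ids : iota 0 n.+1 = iota 0 y ++ y :: iota y.+1 (x - y) ++ iota x.+1 (n - x).
  rewrite -[n.+1]subn0 (@iota_cut 0 y n.+1); last lia.
  rewrite (@iota_cut y y.+1 n.+1); last lia.
  rewrite (@iota_cut y.+1 x.+1 n.+1); last lia.
  by rewrite subn0 subSnn subSS.
have B_shift : map (relab_ii x y) (iota y.+1 (x - y.+1)) = iota y.+2 (x - y.+1).
  rewrite -[y.+2]add1n iotaDl; apply/eq_in_map => t.
  rewrite mem_iota /relab_ii => t_in; case: eqP => [|_]; first lia.
  by case: andP => [//|]; lia.
have r_fix t : (t <= y) || (x < t) -> relab_ii x y t = t by exact: relab_ii_id.
have r_fixs m l : (m + l <= y.+1) || (x < m) -> map (relab_ii x y) (iota m l) = iota m l.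
  move=> ?; rewrite -[RHS]map_id; apply/eq_in_map => t.
  by rewrite mem_iota => ?; apply: r_fix; lia.
split; first by rewrite ids (_ : x - y = (x - y.+1).+1) //; lia.
rewrite ids (_ : x - y = x - y.+1 + 1); last lia.
rewrite iotaD (_ : y.+1 + (x - y.+1) = x); last lia.
rewrite !map_cat /= !map_cat /= B_shift [relab_ii x y x]/relab_ii eqxx -catA.
by rewrite !r_fixs ?r_fix //; lia.
Qed.

Section CyclicOperationCases.
Variables (gT : finGroupType) (n : nat) (theta : 'S_n).

Lemma nsol_op_i x y : x.+1 < y <= n -> bbc theta y = x ->
  nsol gT (map inord (map (relab_i x y) (iota 0 n.+1))) (oword theta) =
  nsol gT (oword 1) (oword theta).
Proof.
move=> xyn adj; have [ids rids] := relab_i_iota xyn.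
have /(bbc_adjacent theta) [D [E]] : 0 < y <= n by lia.
rewrite adj => oE.
have u1 := uniq_oword (1 : 'S_n); have u2 := uniq_oword theta.
rewrite /oword oneline0_perm1 rids ids oE !map_cat /= !map_cat /= in u1 u2 *.
by symmetry; apply: nsol_move.
Qed.

Lemma nsol_op_ii x y : y < x < n -> bbc theta x.+1 = y ->
  nsol gT (map inord (map (relab_ii x y) (iota 0 n.+1))) (oword theta) =
  nsol gT (oword 1) (oword theta).
Proof.
move=> yxn adj; have /relab_ii_iota[ids rids] : y < x <= n by lia.
have /(bbc_adjacent theta) [D [E]] : 0 < x.+1 <= n by lia.
rewrite adj => oE.
have u1 := uniq_oword (1 : 'S_n); have u2 := uniq_oword theta.
rewrite (_ : n - x = (n - x.+1).+1) in ids rids; last lia.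
rewrite /oword oneline0_perm1 rids ids oE !map_cat /= !map_cat /= in u1 u2 *.
by symmetry; apply: nsol_move_rev.
Qed.

Lemma nsol_op_ii_wrap y : 0 < y < n -> bbc theta 0 = y ->
  nsol gT (map inord (map (relab_ii n y) (iota 0 n.+1))) (oword theta) =
  nsol gT (oword 1) (oword theta).
Proof.
move=> yn adj; have /relab_ii_iota[ids rids] : y < n <= n by lia.
have /(bbc0_last theta)[D] : 0 < n by lia.
rewrite adj => oE.
have A0 : iota 0 y = 0 :: iota 1 y.-1 by case: y {adj ids rids oE} yn.
rewrite subnn [iota n.+1 0]/= cats0 A0 in ids rids.
have u1 := uniq_oword (1 : 'S_n); have u2 := uniq_oword theta.
rewrite /oword oneline0_perm1 rids ids oE /= -!rcons_uniq in u1 u2 *.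
rewrite !nsol_cons2 -[LHS](nsol_rcons2 _ (inord 0)) -[RHS](nsol_rcons2 _ (inord 0)).
rewrite -!cats1 !map_cat -!catA /= !map_cat /= -!catA /= in u1 u2 *.
by symmetry; apply: nsol_move_rev.
Qed.

End CyclicOperationCases.

Theorem mainTheorem2 (gT : finGroupType) (n : nat) (phi theta : 'S_n) (x y : nat) :
  1 <= n -> cyclic_op phi theta x y -> word_prob gT phi = word_prob gT theta.
Proof.
move=> n_gt0 [xn yn bbc_sx bbc_y [[lt_xn [xy r_bbc]] | [yx r_bbc]]];
  rewrite !word_prob_nsol; congr (_%:R / _)%R.
- have r_id t : (t <= x) || (y <= t) -> relab_i x y t = t by exact: relab_i_id.
  have adj : bbc theta y = x by have := r_bbc y yn; rewrite bbc_y !r_id ?leqnn ?orbT.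
  by rewrite (nsol_relabel gT (r_id 0 _) r_bbc) // nsol_op_i ?xy.
- have r_id t : (t <= y) || (x < t) -> relab_ii x y t = t by exact: relab_ii_id.
  rewrite (nsol_relabel gT (r_id 0 _) r_bbc) //.
  have [lt_xn | le_nx] := ltnP x n.
    rewrite /succ_cyc ifN_eq ?neq_ltn ?lt_xn // in bbc_sx.
    have adj : bbc theta x.+1 = y.
      by have := r_bbc x.+1 lt_xn; rewrite bbc_sx !r_id ?leqnn ?orbT.
    by rewrite nsol_op_ii ?yx.
  have {xn le_nx} x_eq : x = n by apply/eqP; rewrite eqn_leq xn.
  rewrite {}x_eq in bbc_sx bbc_y r_id r_bbc yx *.
  rewrite /succ_cyc eqxx in bbc_sx.
  have adj : bbc theta 0 = y by have := r_bbc 0 (leq0n n); rewrite bbc_sx !r_id ?leqnn.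
  have y_gt0 : 0 < y.
    by rewrite lt0n; apply/eqP => y0; move: n_gt0; rewrite -bbc_y y0 bbc_sx y0.
  by rewrite nsol_op_ii_wrap ?y_gt0.
Qed.
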